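(* In the Hex plane, the p-area of every parallelogram equals base $\times$ height, where the base is the Hex-norm length of one side and the height is the Hex distance between the line containing that side and the line containing the opposite side.
   Context: Let $u_0=(1,0)$, $u_1=(-1/2,\sqrt3/2)$, $u_2=-u_0-u_1$, and let $H$ be the convex hull of $\{\pm u_0,\pm u_1,\pm u_2\}$. The Hex plane is $\mathbb R^2$ with the norm whose unit ball is $H$ and the induced metric. The p-area of a 2-dimensional normed space is $K^{-1}\lambda$ where $\lambda$ is Lebesgue measure from an inner product and $K$ is the supremum of $\lambda$-areas of parallelograms spanned by two vectors of norm $\le1$. *)

From HB Require Import structures.
From mathcomp Require Import all_boot all_order all_algebra.
From mathcomp Require Import classical_sets reals.
Set Implicit Arguments. Unset Strict Implicit. Unset Printing Implicit Defensive.
Import Order.TTheory GRing.Theory Num.Theory.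
Local Open Scope ring_scope.
Local Open Scope classical_set_scope.

Section Hex.
Variable R : realType.
Definition pt := (R * R)%type.

Definition padd (x y : pt) : pt := (x.1 + y.1, x.2 + y.2).
Definition psub (x y : pt) : pt := (x.1 - y.1, x.2 - y.2).
Definition pscale (t : R) (x : pt) : pt := (t * x.1, t * x.2).
Definition popp (x : pt) : pt := (- x.1, - x.2).

Definition u0 : pt := (1, 0).
Definition u1 : pt := (- (1 / 2), Num.sqrt 3 / 2).
Definition u2 : pt := popp (padd u0 u1).

Definition hex_vertex (i : 'I_6) : pt :=
  nth u0 [:: u0; popp u0; u1; popp u1; u2; popp u2] i.

Definition hexH : set pt :=
  [set v | exists c : 'I_6 -> R, (forall i, 0 <= c i) /\ \sum_(i < 6) c i = 1 /\
      v = (\sum_(i < 6) c i * (hex_vertex i).1, \sum_(i < 6) c i * (hex_vertex i).2)].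

Definition hexnorm (v : pt) : R :=
  inf [set t : R | 0 <= t /\ exists w, hexH w /\ v = pscale t w].

Definition hexdist (x y : pt) : R := hexnorm (psub x y).

Definition det2 (a b : pt) : R := a.1 * b.2 - a.2 * b.1.
Definition lam_area_span (a b : pt) : R := `| det2 a b |.

Definition Khex : R :=
  sup [set x : R | exists a b, hexnorm a <= 1 /\ hexnorm b <= 1 /\ x = lam_area_span a b].

Definition parallelogram (p a b : pt) : set pt :=
  [set padd p (padd (pscale s a) (pscale t b)) | s in `[0, 1]%classic & t in `[0,1]%classic].

Definition parea_pgram (p a b : pt) : R := Khex^-1 * lam_area_span a b.

Definition line (q a : pt) : set pt := [set padd q (pscale s a) | s in [set: R]].

Definition set_hexdist (A B : set pt) : R :=
  inf [set d : R | exists x y, A x /\ B y /\ d = hexdist x y].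

End Hex.

From mathcomp Require Import all_boot all_order all_algebra.
From mathcomp Require Import classical_sets reals.
From mathcomp Require Import ring lra.
Set Implicit Arguments. Unset Strict Implicit. Unset Printing Implicit Defensive.
Import Order.TTheory GRing.Theory Num.Theory.
Local Open Scope ring_scope.

(* In the oblique coordinates X = x + y / sqrt 3, Y = 2 y / sqrt 3, in which
   u0 = (1, 0) and u1 = (0, 1), the Hex norm is max(|X|, |Y|, |X - Y|) and the
   Lebesgue area of the parallelogram spanned by v, v' is (sqrt 3 / 2) |XY' - YX'|.
   Everything rests on |XY' - YX'| <= |v| |v'|, with equality for u0, u1.  It
   gives K = sqrt 3 / 2, so the p-area is |XY' - YX'|; and it shows that the
   Hex distance from b to the line R a is |det(a, b)| / |a|, the bound being
   attained by sliding along a until the coordinate realising |a| cancels. *)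

Section TriNorm.
Variable R : realFieldType.

Definition tri_norm (x y : R) : R := Num.max `|x| (Num.max `|y| `|x - y|).

Lemma tri_norm_le (x y t : R) :
  (tri_norm x y <= t) = [&& `|x| <= t, `|y| <= t & `|x - y| <= t].
Proof. by rewrite /tri_norm !ge_max. Qed.

Lemma tri_norm_ge (x y : R) :
  [/\ `|x| <= tri_norm x y, `|y| <= tri_norm x y & `|x - y| <= tri_norm x y].
Proof. by apply/and3P; rewrite -tri_norm_le. Qed.

Lemma tri_norm_ge0 (x y : R) : 0 <= tri_norm x y.
Proof. by have [+ _ _] := tri_norm_ge x y; apply: le_trans. Qed.

Lemma tri_norm_cases (x y : R) :
  [\/ tri_norm x y = `|x|, tri_norm x y = `|y| | tri_norm x y = `|x - y|].
Proof.
rewrite /tri_norm; case: (leP `|y| `|x - y|) => _;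
  [case: (leP `|x| `|x - y|) | case: (leP `|x| `|y|)] => _;
  by [apply: Or31 | apply: Or32 | apply: Or33].
Qed.

Lemma tri_norm_eq0 (x y : R) : tri_norm x y = 0 -> x = 0 /\ y = 0.
Proof.
move=> N0; have [+ + _] := tri_norm_ge x y.
by rewrite N0 !normr_le0 => /eqP -> /eqP ->.
Qed.

Lemma tri_norm0l (y : R) : tri_norm 0 y = `|y|.
Proof. by rewrite /tri_norm normr0 sub0r normrN maxxx max_r. Qed.

Lemma tri_norm0r (x : R) : tri_norm x 0 = `|x|.
Proof. by rewrite /tri_norm normr0 subr0 (max_r (normr_ge0 x)) maxxx. Qed.

Lemma tri_norm_diag (x : R) : tri_norm x x = `|x|.
Proof. by rewrite /tri_norm subrr normr0 (max_l (normr_ge0 x)) maxxx. Qed.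

Lemma tri_normZ (t x y : R) : tri_norm (t * x) (t * y) = `|t| * tri_norm x y.
Proof. by rewrite /tri_norm !maxr_pMr // -!normrM mulrBr. Qed.

Lemma det_le_tri_norm (x y x' y' : R) :
  `|x * y' - y * x'| <= tri_norm x y * tri_norm x' y'.
Proof.
have [] := tri_norm_ge x y; have [] := tri_norm_ge x' y'.
move: (tri_norm x y) (tri_norm x' y') => n n'; rewrite !ler_norml.
move=> /andP[? ?] /andP[? ?] /andP[? ?] /andP[? ?] /andP[? ?] /andP[? ?].
by have [?|?] := lerP 0 x; have [?|?] := lerP 0 y; have [?|?] := lerP y x; nra.
Qed.

Lemma tri_norm_dist_line_attained (x y x' y' : R) : tri_norm x' y' != 0 ->
  exists r, tri_norm (r * x' - x) (r * y' - y) = `|x' * y - y' * x| / tri_norm x' y'.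
Proof.
have [N'|N'|N'] := tri_norm_cases x' y'; rewrite N' normr_eq0 => nz.
- exists (x / x'); rewrite (_ : _ * x' - x = 0); last by field.
  by rewrite tri_norm0l -normf_div -normrN; congr `|_|; field.
- exists (y / y'); rewrite [_ * y' - y](_ : _ = 0); last by field.
  by rewrite tri_norm0r -normf_div; congr `|_|; field.
- exists ((x - y) / (x' - y')).
  rewrite [_ * y' - y](_ : _ = (x - y) / (x' - y') * x' - x); last by field.
  by rewrite tri_norm_diag -normf_div -normrN; congr `|_|; field.
Qed.

Lemma tri_ball_convex_weights (X Y : R) :
  `|X| <= 1 -> `|Y| <= 1 -> `|X - Y| <= 1 ->
  exists k0 k1 k2 k3 k4 k5 : R,
   [/\ 0 <= k0, 0 <= k1, 0 <= k2, 0 <= k3 & 0 <= k4] /\ 0 <= k5 /\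
   k0 + (k1 + (k2 + (k3 + (k4 + (k5 + 0))))) = 1 /\
   k0 - k1 - k4 + k5 = X /\ k2 - k3 - k4 + k5 = Y.
Proof.
rewrite !ler_norml => /andP[? ?] /andP[? ?] /andP[? ?].
have [?|?] := lerP 0 X; have [?|?] := lerP 0 Y; have [?|?] := lerP Y X.
- exists (X - Y + (1 - X)/2), ((1 - X)/2), 0, 0, 0, Y; repeat split; lra.
- exists 0, 0, (Y - X + (1 - Y)/2), ((1 - Y)/2), 0, X; repeat split; lra.
- exists (X + (1 - X + Y)/2), ((1 - X + Y)/2), 0, (-Y), 0, 0; repeat split; lra.
- exfalso; lra.
- exfalso; lra.
- exists 0, (-X), (Y + (1 + X - Y)/2), ((1 + X - Y)/2), 0, 0; repeat split; lra.
- exists 0, 0, ((1 + Y)/2), (X - Y + (1 + Y)/2), (-X), 0; repeat split; lra.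
- exists ((1 + X)/2), (Y - X + (1 + X)/2), 0, 0, (-Y), 0; repeat split; lra.
Qed.

End TriNorm.

Lemma inf_eq_min (R : realType) (E : set R) m :
  E m -> (forall x, E x -> m <= x) -> inf E = m.
Proof.
move=> Em lbm; apply: le_anti; apply/andP; split.
- by apply: (ge_inf _ Em); exists m.
- by apply: lb_le_inf; [exists m |].
Qed.

Lemma sup_eq_max (R : realType) (E : set R) m :
  E m -> (forall x, E x -> x <= m) -> sup E = m.
Proof.
move=> Em ubm; apply: le_anti; apply/andP; split.
- by apply: ge_sup; [exists m |].
- by apply: (sup_upper_bound _ Em); split; [exists m | exists m].
Qed.

Section HexCoordinates.
Variable R : realType.
Local Notation sqrt3 := (Num.sqrt (3 : R)).

Lemma sqrt3_gt0 : 0 < sqrt3. Proof. by rewrite sqrtr_gt0 ltr0n. Qed.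
Lemma sqrt3_neq0 : sqrt3 != 0. Proof. exact: lt0r_neq0 sqrt3_gt0. Qed.

Definition hexX (v : pt R) : R := v.1 + v.2 / sqrt3.
Definition hexY (v : pt R) : R := 2 * v.2 / sqrt3.
Definition hex_coord_norm (v : pt R) : R := tri_norm (hexX v) (hexY v).

Lemma hexXZ t v : hexX (pscale t v) = t * hexX v.
Proof. by rewrite /hexX /=; field; exact: sqrt3_neq0. Qed.

Lemma hexYZ t v : hexY (pscale t v) = t * hexY v.
Proof. by rewrite /hexY /=; field; exact: sqrt3_neq0. Qed.

Lemma hex_coord_normZ t v : hex_coord_norm (pscale t v) = `|t| * hex_coord_norm v.
Proof. by rewrite /hex_coord_norm hexXZ hexYZ tri_normZ. Qed.

Lemma hex_coord_norm_eq0 v : hex_coord_norm v = 0 -> v = (0, 0).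
Proof.
case: v => v1 v2 /tri_norm_eq0[]; rewrite /hexX /hexY /= => X0 Y0.
move/eqP: Y0; rewrite !mulf_eq0 invr_eq0 (negbTE sqrt3_neq0) pnatr_eq0 /=.
by rewrite orbF => /eqP v20; move: X0; rewrite v20 mul0r addr0 => ->.
Qed.

Lemma det2E (a b : pt R) :
  det2 a b = sqrt3 / 2 * (hexX a * hexY b - hexY a * hexX b).
Proof. by rewrite /det2 /hexX /hexY; field; exact: sqrt3_neq0. Qed.

Lemma hex_coord_norm_u0 : hex_coord_norm (u0 R) = 1.
Proof.
by rewrite /hex_coord_norm /hexX /hexY /= !(mul0r, mulr0) addr0 tri_norm0r normr1.
Qed.

Lemma hex_coord_norm_u1 : hex_coord_norm (u1 R) = 1.
Proof.
rewrite /hex_coord_norm /hexX /hexY /=.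
rewrite (_ : - (1 / 2) + sqrt3 / 2 / sqrt3 = 0); last by field; exact: sqrt3_neq0.
rewrite (_ : 2 * (sqrt3 / 2) / sqrt3 = 1); last by field; exact: sqrt3_neq0.
by rewrite tri_norm0l normr1.
Qed.

(* The vertices u0, -u0, u1, -u1, u2, -u2 have coordinates (1,0), (-1,0),
   (0,1), (0,-1), (-1,-1), (1,1). *)
Lemma hexHP w : hexH w <-> hex_coord_norm w <= 1.
Proof.
split.
- move=> [c [c_ge0 []]]; rewrite !big_ord_recl !big_ord0 /= => c_sum ->.
  have := c_ge0 ord0; have := c_ge0 (lift ord0 ord0).
  have := c_ge0 (lift ord0 (lift ord0 ord0)).
  have := c_ge0 (lift ord0 (lift ord0 (lift ord0 ord0))).
  have := c_ge0 (lift ord0 (lift ord0 (lift ord0 (lift ord0 ord0)))).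
  have := c_ge0 (lift ord0 (lift ord0 (lift ord0 (lift ord0 (lift ord0 ord0))))).
  move: c_sum; rewrite /hex_coord_norm /hexX /hexY /=.
  set k0 := c _; set k1 := c _; set k2 := c _; set k3 := c _; set k4 := c _; set k5 := c _.
  move=> c_sum ? ? ? ? ? ?.
  rewrite (_ : _ + _ / sqrt3 = k0 - k1 - k4 + k5); last by field; exact: sqrt3_neq0.
  rewrite (_ : 2 * _ / sqrt3 = k2 - k3 - k4 + k5); last by field; exact: sqrt3_neq0.
  by rewrite tri_norm_le !ler_norml; apply/and3P; split; apply/andP; split; lra.
- rewrite /hex_coord_norm tri_norm_le => /and3P[X1 Y1 XY1].
  have [k0 [k1 [k2 [k3 [k4 [k5 [[? ? ? ? ?] [? [k_sum [kX kY]]]]]]]]]] :=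
    tri_ball_convex_weights X1 Y1 XY1.
  exists (fun i : 'I_6 => nth 0 [:: k0; k1; k2; k3; k4; k5] i); split.
    by case=> [[|[|[|[|[|[|i]]]]]] ?].
  rewrite !big_ord_recl !big_ord0 /=; split=> //.
  move: kX kY; case: w {X1 Y1 XY1} => w1 w2; rewrite /hexX /hexY /= => kX kY.
  have -> : w2 = (k2 - k3 - k4 + k5) * sqrt3 / 2.
    by rewrite kY; field; exact: sqrt3_neq0.
  have -> : w1 = (k0 - k1 - k4 + k5) - (k2 - k3 - k4 + k5) / 2.
    by rewrite kX kY; field; exact: sqrt3_neq0.
  by congr (_, _); field.
Qed.

Lemma hexnormE v : hexnorm v = hex_coord_norm v.
Proof.
apply: inf_eq_min.
- split; first exact: tri_norm_ge0.
  have [N0|N_neq0] := eqVneq (hex_coord_norm v) 0.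
    exists (u0 R); split; first by apply/hexHP; rewrite hex_coord_norm_u0.
    by rewrite N0 (hex_coord_norm_eq0 N0) /pscale /= !mul0r.
  exists (pscale (hex_coord_norm v)^-1 v); split.
    apply/hexHP; rewrite hex_coord_normZ ger0_norm ?invr_ge0 ?tri_norm_ge0 //.
    by rewrite mulVf.
  by case: v N_neq0 => v1 v2 ?; rewrite /pscale /=; congr (_, _); field.
- move=> t [t0 [w [/hexHP w1 ->]]].
  by rewrite hex_coord_normZ (ger0_norm t0) -[leRHS]mulr1 ler_wpM2l.
Qed.

Lemma KhexE : Khex R = sqrt3 / 2.
Proof.
have s_ge0 : 0 <= sqrt3 / 2 by rewrite divr_ge0 ?ltW ?sqrt3_gt0.
apply: sup_eq_max.
- exists (u0 R), (u1 R); rewrite !hexnormE hex_coord_norm_u0 hex_coord_norm_u1.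
  by rewrite /lam_area_span /det2 /= mul0r subr0 mul1r ger0_norm.
- move=> _ [a [b [+ [+ ->]]]]; rewrite !hexnormE => a1 b1.
  rewrite /lam_area_span det2E normrM (ger0_norm s_ge0) -[leRHS]mulr1 ler_wpM2l //.
  apply: le_trans (det_le_tri_norm _ _ _ _) _.
  by rewrite -[1]mulr1 ler_pM ?tri_norm_ge0.
Qed.

Lemma hex_coord_norm_between_lines (p a b : pt R) r t :
  hex_coord_norm (psub (padd p (pscale r a)) (padd (padd p b) (pscale t a))) =
  tri_norm ((r - t) * hexX a - hexX b) ((r - t) * hexY a - hexY b).
Proof.
by rewrite /hex_coord_norm /hexX /hexY /=; congr tri_norm; field; exact: sqrt3_neq0.
Qed.

Lemma set_hexdist_parallel_lines (p a b : pt R) : hex_coord_norm a != 0 ->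
  set_hexdist (line p a) (line (padd p b) a) =
  `|hexX a * hexY b - hexY a * hexX b| / hex_coord_norm a.
Proof.
move=> Na_neq0; apply: inf_eq_min.
- have [r r_dist] := tri_norm_dist_line_attained (hexX b) (hexY b) Na_neq0.
  exists (padd p (pscale r a)), (padd (padd p b) (pscale 0 a)).
  split; first by exists r.
  split; first by exists 0.
  by rewrite /hexdist hexnormE hex_coord_norm_between_lines subr0 r_dist.
- move=> _ [_ [_ [[r _ <-] [[t _ <-] ->]]]].
  have Na_gt0 : 0 < hex_coord_norm a by rewrite lt0r Na_neq0 tri_norm_ge0.
  rewrite /hexdist hexnormE hex_coord_norm_between_lines ler_pdivrMr //.
  rewrite (_ : hexX a * hexY b - _ = ((r - t) * hexX a - hexX b) * hexY a
                                   - ((r - t) * hexY a - hexY b) * hexX a); last by ring.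
  exact: det_le_tri_norm.
Qed.

End HexCoordinates.

Theorem lemma2p5 (R : realType) (p a b : pt R) :
  det2 a b != 0 ->
  parea_pgram p a b =
    hexnorm a * set_hexdist (line p a) (line (padd p b) a).
Proof.
rewrite det2E mulf_eq0 negb_or => /andP[_ D_neq0].
have Na_neq0 : hex_coord_norm a != 0.
  apply: contra D_neq0 => /eqP/hex_coord_norm_eq0 ->.
  by rewrite /hexX /hexY /= !(mul0r, mulr0, addr0) subrr.
rewrite /parea_pgram KhexE /lam_area_span set_hexdist_parallel_lines // det2E.
rewrite normrM hexnormE ger0_norm ?divr_ge0 ?ltW ?sqrt3_gt0 //.
rewrite mulKf ?mulf_neq0 ?invr_eq0 ?pnatr_eq0 ?sqrt3_neq0 //.
by rewrite [hex_coord_norm a * _]mulrC divfK.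
Qed.
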